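(* Let $n\geqslant0$, $q=3^{2n+1}$, $A=\{\alpha-\alpha^{3^{n+1}}:\alpha\in\mathbb{F}_q\}$, and for $t\in\mathbb{F}_q$ let $tA=\{ta:a\in A\}$. Let $T\subseteq\mathbb{F}_q^\times$, $T^{-1}=\{t^{-1}:t\in T\}$, and let $\mathrm{span}_{\mathbb{F}_3}(T^{-1})$ be the $\mathbb{F}_3$-subspace of $\mathbb{F}_q$ spanned by $T^{-1}$. Then $$\bigcap_{t\in T}tA=\bigcap_{0\neq s\in\mathrm{span}_{\mathbb{F}_3}(T^{-1})}s^{-1}A.$$
   Context: $A$ is an $\mathbb{F}_3$-subspace of $\mathbb{F}_q$ (it equals the kernel of the trace map $\mathbb{F}_q\to\mathbb{F}_3$). An intersection over an empty index set is taken to be $\mathbb{F}_q$. *)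

From HB Require Import structures.
From mathcomp Require Import all_boot all_order all_algebra all_field.
Set Implicit Arguments. Unset Strict Implicit. Unset Printing Implicit Defensive.
Import GRing.Theory.
Local Open Scope ring_scope.

Definition Aset (F : finFieldType) (n : nat) : {set F} :=
  [set x - x ^+ (3 ^ n.+1)%N | x : F].

Definition scale_set (F : finFieldType) (t : F) (B : {set F}) : {set F} :=
  [set t * b | b in B].

Definition inv_set (F : finFieldType) (T : {set F}) : {set F} :=
  [set t^-1 | t in T].

(* F_3-span of S: all linear combinations with coefficients in the prime
   field F_3 = {0, 1, 2} (embedded via the nat cast %:R). *)
Definition span3 (F : finFieldType) (S : {set F}) : {set F} :=
  [set \sum_(s in S) ((c s : nat)%:R * s) | c : {ffun F -> 'I_3}].

From HB Require Import structures.
From mathcomp Require Import all_boot all_order all_algebra all_field.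
Import GRing.Theory.
Local Open Scope ring_scope.

(* In characteristic 3 the map a |-> a - a^(3^(n+1)) is additive, so A is an
   additive subgroup, and so is M_x = {u | u x \in A} for every x.  Now
   x \in tA iff t^-1 \in M_x, hence the left side is the set of x with
   T^-1 \subset M_x, the right side the set of x with span(T^-1) \subset M_x,
   and these agree because M_x is closed under addition.  The exclusion of
   s = 0 on the right is harmless since 0 \in A. *)

Section ScaledSets.
Variable F : finFieldType.

Lemma mem_scale_set (B : {set F}) t x :
  t != 0 -> (x \in scale_set t B) = (t^-1 * x \in B).
Proof.
move=> t0; apply/imsetP/idP => [[b Bb ->]|Bx]; first by rewrite mulKf.
by exists (t^-1 * x); last rewrite mulVKf.
Qed.

Lemma mem_bigcap_scale_set (B T : {set F}) x : 0 \notin T ->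
  (x \in \bigcap_(t in T) scale_set t B) = (inv_set T \subset [set u | u * x \in B]).
Proof.
move=> T0; have t_neq0 t : t \in T -> t != 0 by move=> tT; apply: contraNneq T0 => <-.
apply/bigcapP/subsetP => [xTB _ /imsetP[t tT ->] | sub t tT].
  by rewrite inE -mem_scale_set ?t_neq0 ?xTB.
by rewrite mem_scale_set ?t_neq0 //; have := sub t^-1 (imset_f _ tT); rewrite inE.
Qed.

Lemma mem_bigcap_scale_set_inv (B S : {set F}) x : 0 \in B ->
  (x \in \bigcap_(s in S | s != 0) scale_set s^-1 B)
  = (S \subset [set u | u * x \in B]).
Proof.
move=> B0; apply/bigcapP/subsetP => [xSB s sS | sub s /andP[sS s0]].
  rewrite inE; have [->|s0] := eqVneq s 0; first by rewrite mul0r.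
  by have := xSB s; rewrite sS s0 mem_scale_set ?invr_eq0 // invrK; apply.
by rewrite mem_scale_set ?invr_eq0 // invrK; have := sub s sS; rewrite inE.
Qed.

Lemma addr_closed_mulr_preim (B : {set F}) x :
  addr_closed B -> addr_closed [set u | u * x \in B].
Proof.
case=> B0 BD; split; first by rewrite inE mul0r.
by move=> u v; rewrite !inE mulrDl; apply: BD.
Qed.

Lemma mem_span3 (S : {set F}) s : s \in S -> s \in span3 S.
Proof.
move=> Ss; apply/imsetP; exists [ffun u => if u == s then 1 : 'I_3 else 0] => //.
rewrite (bigD1 s) //= ffunE eqxx mul1r big1 ?addr0 // => u /andP[_ /negbTE us].
by rewrite ffunE us mul0r.
Qed.

Lemma span3_subset (S B : {set F}) :
  addr_closed B -> (span3 S \subset B) = (S \subset B).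
Proof.
case=> B0 BD; apply/subsetP/subsetP => sub.
  by move=> s /mem_span3/sub.
move=> _ /imsetP[c _ ->]; apply: (big_ind (fun y => y \in B)) => // s /sub Bs.
rewrite mulr_natl; elim: (nat_of_ord (c s)) => [|k IH]; first by rewrite mulr0n.
by rewrite mulrS BD.
Qed.

Lemma Aset_addr_closed n : 3 \in [pchar F] -> addr_closed (Aset F n).
Proof.
move=> pchar3.
have frobD (a b : F) : (a + b) ^+ (3 ^ n.+1)%N = a ^+ (3 ^ n.+1)%N + b ^+ (3 ^ n.+1)%N.
  by apply: exprDn_pchar; rewrite (eq_pnat _ (pcharf_eq pchar3)) pnatX.
split; first by apply/imsetP; exists 0; rewrite // expr0n expn_eq0 subr0.
move=> _ _ /imsetP[a _ ->] /imsetP[b _ ->]; apply/imsetP; exists (a + b) => //.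
by rewrite frobD opprD addrACA.
Qed.

End ScaledSets.

Theorem lemma4p1 (n : nat) (F : finFieldType)
  (hF : #|F| = (3 ^ (2 * n + 1))%N) (T : {set F}) (hT : 0 \notin T) :
  \bigcap_(t in T) scale_set t (Aset F n)
  = \bigcap_(s in span3 (inv_set T) | s != 0) scale_set s^-1 (Aset F n).
Proof.
have A_closed : addr_closed (Aset F n).
  by apply: Aset_addr_closed; apply: (card_finPcharP hF).
apply/setP => x.
rewrite mem_bigcap_scale_set // mem_bigcap_scale_set_inv; last by case: A_closed.
by rewrite span3_subset //; apply: addr_closed_mulr_preim.
Qed.
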